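(* Let $X_t\subset X_{t+p}$ be finite simplicial complexes with oriented simplices (orientations on $X_t$ inherited), whose vertices $v_i$ carry nonzero real labels $q_i$, and let $F$ be a nowhere-zero real function on the simplices of $X_{t+p}$. Let $\mathscr{S}_{t+p}$ be the labeled sheaf on $X_{t+p}$ determined by $(q_i)$ and $F$, and $\mathscr{S}_t$ its pullback (equivalently, the labeled sheaf on $X_t$ determined by the same data). Let $c$ be a nonzero real number, and let $\mathscr{S}'_{t+p},\mathscr{S}'_t$ be the sheaves obtained in the same way after replacing every label $q_i$ by $c\,q_i$. Then the spectrum of every persistent sheaf Laplacian $\Delta_q^{t,p}$ for the primed sheaves is obtained from that of the unprimed sheaves by multiplying every eigenvalue by $c^2$.
   Context: Labeled sheaf: every stalk is $\mathbb{R}$ (standard inner product, distinct stalks orthogonal), and for a face relation $\sigma=[v_0,\dots,v_n]\leqslant\tau=[v_0,\dots,v_n,v_{n+1},\dots,v_m]$ the restriction map is multiplication by $F(\sigma)\,q_{n+1}\cdots q_m/F(\tau)$ (product of labels of the vertices of $\tau$ not in $\sigma$). The pullback to $X_t$ has the same stalks and restriction maps on $X_t$. $C^q(X;\mathscr{S})=\bigoplus_{\dim\sigma=q}\mathscr{S}(\sigma)$, and $C^q(X_t;\mathscr{S}_t)$ is the subspace of $C^q(X_{t+p};\mathscr{S}_{t+p})$ spanned by stalks over simplices of $X_t$. Signed incidence: for $\tau=[v_0,\dots,v_n]$, $\sigma=[v_0,\dots,\hat v_i,\dots,v_n]$, $[\sigma:\tau]=(-1)^i$ (or $(-1)^{i+1}$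 if $\sigma$ oppositely oriented), $0$ if not a codimension-one face. Coboundary $d_q|_{\mathscr{S}(\sigma)}=\sum_{\sigma\leqslant\tau}[\sigma:\tau]\mathscr{S}_{\sigma\leqslant\tau}$; $d^t,d^{t+p}$ denote those of the two complexes. With $\mathbb{C}^{t,p}_{q+1}=\{e\in C^{q+1}(X_{t+p};\mathscr{S}_{t+p}) : (d_q^{t+p})^*(e)\in C^q(X_t;\mathscr{S}_t)\}$ and $\eth_q^{t,p}$ the adjoint of $(d_q^{t+p})^*|_{\mathbb{C}^{t,p}_{q+1}}$, the persistent sheaf Laplacian is $\Delta_q^{t,p}=(\eth_q^{t,p})^*\eth_q^{t,p}+d_{q-1}^t(d_{q-1}^t)^*$ on $C^q(X_t;\mathscr{S}_t)$. *)

From HB Require Import structures.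
From mathcomp Require Import all_boot all_order all_algebra.
Set Implicit Arguments. Unset Strict Implicit. Unset Printing Implicit Defensive.
Import Order.TTheory GRing.Theory Num.Theory.
Local Open Scope ring_scope.

(* Vertices are 'I_N (ordered by their natural order); a simplex is a set of
   vertices; a q-simplex has q.+1 vertices. *)
Definition simplex N := {set 'I_N}.

Definition is_complex N (X : {set simplex N}) : Prop :=
  (forall s, s \in X -> s != set0) /\
  (forall s t, s \in X -> t != set0 -> t \subset s -> t \in X).

(* Orientation: [o s = false] means s is oriented by the increasing order of
   its vertices, [o s = true] means the opposite orientation. *)

Section Sheaf.
Variables (R : realFieldType) (N : nat).
Implicit Types (X : {set simplex N}) (s sigma tau : simplex N).

(* Signed incidence [sigma : tau] for the orientation o: if tau = sigma plus
   one vertex v, and v is at position i in tau (sorted), then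
   (-1)^i, corrected by the orientation signs of sigma and tau; 0 otherwise. *)
Definition incidence (o : simplex N -> bool) sigma tau : R :=
  if (sigma \subset tau) && (#|tau| == #|sigma|.+1) then
    (-1) ^+ o sigma * (-1) ^+ o tau *
    \sum_(v in tau :\: sigma) (-1) ^+ #|[set u in tau | (u < v)%N]|
  else 0.

Definition restr (lab : 'I_N -> R) (F : simplex N -> R) sigma tau : R :=
  F sigma * (\prod_(v in tau :\: sigma) lab v) / F tau.

(* Cochains: real functions on all vertex sets; C^q(X) are those supported on
   the q-simplices of X (all stalks are R, orthonormal). *)
Definition cochain := simplex N -> R.

Definition inC X (q : nat) (f : cochain) : Prop :=
  forall s, f s != 0 -> s \in X /\ #|s| = q.+1.

Definition dot (f g : cochain) : R := \sum_s f s * g s.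

Definition cobound o lab F X (q : nat) (f : cochain) : cochain :=
  fun tau => if (tau \in X) && (#|tau| == q.+2) then
    \sum_(sigma in X | #|sigma| == q.+1)
       incidence o sigma tau * restr lab F sigma tau * f sigma
  else 0.

Definition cobound_adj o lab F X (q : nat) (f : cochain) : cochain :=
  fun sigma => if (sigma \in X) && (#|sigma| == q.+1) then
    \sum_(tau in X | #|tau| == q.+2)
       incidence o sigma tau * restr lab F sigma tau * f tau
  else 0.

Definition persC o lab F Xt Xtp (q : nat) (e : cochain) : Prop :=
  inC Xtp q.+1 e /\ inC Xt q (cobound_adj o lab F Xtp q e).

(* eth is (on C^q(X_t)) the adjoint of (d_q^{t+p})^* restricted to
   C^{t,p}_{q+1}, i.e. eth : C^q(X_t) -> C^{t,p}_{q+1} with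
   <eth x, e> = <x, (d_q^{t+p})^* e> for all e in C^{t,p}_{q+1}. *)
Definition is_eth o lab F Xt Xtp (q : nat) (eth : cochain -> cochain) : Prop :=
  forall x, inC Xt q x ->
    persC o lab F Xt Xtp q (eth x) /\
    forall e, persC o lab F Xt Xtp q e ->
      dot (eth x) e = dot x (cobound_adj o lab F Xtp q e).

(* Persistent sheaf Laplacian
   Delta_q^{t,p} = eth^* eth + d_{q-1}^t (d_{q-1}^t)^*  on C^q(X_t),
   where eth^* = (d_q^{t+p})^* restricted to C^{t,p}_{q+1}, and the second
   term is 0 when q = 0. *)
Definition pers_lap o lab F Xt Xtp (q : nat) (eth : cochain -> cochain)
  (x : cochain) : cochain :=
  fun s => cobound_adj o lab F Xtp q (eth x) s +
    (if q is q'.+1 then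
       cobound o lab F Xt q' (cobound_adj o lab F Xt q' x) s
     else 0).

Definition qsimp X (q : nat) : {set simplex N} := [set s in X | #|s| == q.+1].

Definition basis_vec (sigma : simplex N) : cochain := fun s => (s == sigma)%:R.

Definition pers_lap_mx o lab F Xt Xtp (q : nat) (eth : cochain -> cochain)
  : 'M[R]_#|qsimp Xt q| :=
  \matrix_(i, j) pers_lap o lab F Xt Xtp q eth
                   (basis_vec (enum_val j)) (enum_val i).

End Sheaf.

From HB Require Import structures.
From mathcomp Require Import all_boot all_order all_algebra.
Set Implicit Arguments. Unset Strict Implicit. Unset Printing Implicit Defensive.
Import Order.TTheory GRing.Theory Num.Theory.
Local Open Scope ring_scope.

(* Replacing every label q_i by c q_i multiplies each restriction map across a
   codimension-one face by c, hence multiplies d and d^* by c.  The map eth is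
   determined by its adjunction property, because the inner product is
   positive definite, so the primed eth is c times the unprimed one and the
   primed Laplacian is c^2 times the unprimed one.  Scaling a matrix by a
   nonzero a maps the roots of its characteristic polynomial to a times those
   roots, with the same multiplicities. *)

Section CharPolyScale.
Variable R : fieldType.

Lemma char_polyZ n (A : 'M[R]_n) (a : R) : a != 0 ->
  char_poly (a *: A) = a ^+ n *: (char_poly A \Po (a^-1 *: 'X)).
Proof.
move=> a0; rewrite /char_poly.
have -> : char_poly_mx (a *: A) =
    a%:P *: map_mx (comp_poly (a^-1 *: 'X)) (char_poly_mx A).
  apply/matrixP => i j; rewrite !mxE; case: (i == j) => /=.
  - rewrite mulr1n comp_polyB comp_polyX comp_polyC mulrBr -polyCM.
    by rewrite -mul_polyC mulrA -polyCM mulfV // mul1r.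
  - by rewrite mulr0n !sub0r raddfN /= comp_polyC mulrN -polyCM.
by rewrite detZ det_map_mx -rmorphXn mul_polyC.
Qed.

Lemma dvdp_XsubC_comp_scale (p : {poly R}) (a l : R) k : a != 0 ->
  ('X - l%:P) ^+ k %| p -> ('X - (a * l)%:P) ^+ k %| p \Po (a^-1 *: 'X).
Proof.
move=> a0 /(dvdp_comp_poly (a^-1 *: 'X)).
rewrite rmorphXn /= comp_polyB comp_polyX comp_polyC.
have -> : a^-1 *: 'X - l%:P = a^-1 *: ('X - (a * l)%:P).
  by rewrite scalerBr; congr (_ - _); rewrite -mul_polyC -polyCM mulKf.
by rewrite exprZn dvdpZl // expf_neq0 // invr_eq0.
Qed.

Lemma mup_comp_scale (p : {poly R}) (a l : R) : a != 0 -> p != 0 ->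
  mup (a * l) (p \Po (a^-1 *: 'X)) = mup l p.
Proof.
move=> a0 p0.
have pa0 : p \Po (a^-1 *: 'X) != 0.
  by rewrite comp_poly2_eq0 // size_scale ?size_polyX // invr_eq0.
apply/eqP; rewrite eqn_leq; apply/andP; split; last first.
  by rewrite mup_geq //; apply: dvdp_XsubC_comp_scale; rewrite // -mup_geq.
(* The reverse inequality: composing back with a *: 'X recovers p. *)
have dvd_pa : ('X - (a * l)%:P) ^+ mup (a * l) (p \Po (a^-1 *: 'X))
    %| p \Po (a^-1 *: 'X) by rewrite -mup_geq.
have := dvdp_XsubC_comp_scale (invr_neq0 a0) dvd_pa.
rewrite invrK mulKf // -comp_polyA comp_polyZ comp_polyX scalerA mulVf //.
by rewrite scale1r comp_polyXr -mup_geq.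
Qed.

Lemma mup_char_polyZ n (A : 'M[R]_n) (a l : R) : a != 0 ->
  mup (a * l) (char_poly (a *: A)) = mup l (char_poly A).
Proof.
move=> a0; rewrite char_polyZ // -mul_polyC mupMr ?rootC ?expf_neq0 //.
exact/mup_comp_scale/monic_neq0/char_poly_monic.
Qed.

End CharPolyScale.

Section Cochains.
Variables (R : realFieldType) (N : nat).
Implicit Types (X : {set simplex N}) (f g : cochain R N).

Lemma eq_inC X q f g : f =1 g -> inC X q f -> inC X q g.
Proof. by move=> fg hf s; rewrite -fg; apply: hf. Qed.

Lemma inCZ X q k f : inC X q f -> inC X q (fun s => k * f s).
Proof. by move=> hf s; rewrite mulf_eq0 negb_or => /andP[_]; apply: hf. Qed.

Lemma inCB X q f g : inC X q f -> inC X q g -> inC X q (f \- g).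
Proof.
move=> hf hg s /=; have [f0|/hf //] := eqVneq (f s) 0.
by have [g0|/hg //] := eqVneq (g s) 0; rewrite f0 g0 subrr eqxx.
Qed.

Lemma dotBl f g h : dot (f \- g) h = dot f h - dot g h.
Proof. by rewrite /dot -sumrB; apply: eq_bigr => s _; rewrite mulrBl. Qed.

Lemma dotZl k f g : dot (fun s => k * f s) g = k * dot f g.
Proof. by rewrite /dot mulr_sumr; apply: eq_bigr => s _; rewrite mulrA. Qed.

Lemma dotZr k f g : dot f (fun s => k * g s) = k * dot f g.
Proof. by rewrite /dot mulr_sumr; apply: eq_bigr => s _; rewrite mulrCA. Qed.

Lemma eq_dotr f g h : g =1 h -> dot f g = dot f h.
Proof. by move=> gh; apply: eq_bigr => s _; rewrite gh. Qed.

Lemma dot_self_eq0 f : dot f f = 0 -> f =1 (fun=> 0).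
Proof.
move=> /eqP; rewrite /dot psumr_eq0 => [/allP f0 s|s _]; last exact: sqr_ge0.
by have /implyP := f0 s (mem_index_enum s); rewrite mulf_eq0 orbb => /(_ isT)/eqP.
Qed.

Lemma basis_vec_inC X q sigma :
  sigma \in qsimp X q -> inC X q (basis_vec R sigma).
Proof.
rewrite inE => /andP[sX /eqP sq] s; rewrite /basis_vec.
by have [-> | _] := eqVneq s sigma; rewrite ?eqxx.
Qed.

End Cochains.

Section CoboundaryLinear.
Context {R : realFieldType} {N : nat} {o : simplex N -> bool}
  {lab : 'I_N -> R} {F : simplex N -> R} {X : {set simplex N}} {q : nat}.
Implicit Types (f g : cochain R N).

Lemma coboundZ k f s :
  cobound o lab F X q (fun t => k * f t) s = k * cobound o lab F X q f s.
Proof.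
rewrite /cobound; case: ifP => _; last by rewrite mulr0.
by rewrite mulr_sumr; apply: eq_bigr => t _; rewrite mulrCA.
Qed.

Lemma cobound_adjZ k f s :
  cobound_adj o lab F X q (fun t => k * f t) s = k * cobound_adj o lab F X q f s.
Proof.
rewrite /cobound_adj; case: ifP => _; last by rewrite mulr0.
by rewrite mulr_sumr; apply: eq_bigr => t _; rewrite mulrCA.
Qed.

Lemma cobound_adjB f g s :
  cobound_adj o lab F X q (f \- g) s =
  cobound_adj o lab F X q f s - cobound_adj o lab F X q g s.
Proof.
rewrite /cobound_adj; case: ifP => _; last by rewrite subrr.
by rewrite -sumrB; apply: eq_bigr => t _; rewrite mulrBr.
Qed.

Lemma eq_cobound f g : f =1 g -> cobound o lab F X q f =1 cobound o lab F X q g.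
Proof.
move=> fg s; rewrite /cobound; case: ifP => // _.
by apply: eq_bigr => t _; rewrite fg.
Qed.

Lemma eq_cobound_adj f g :
  f =1 g -> cobound_adj o lab F X q f =1 cobound_adj o lab F X q g.
Proof.
move=> fg s; rewrite /cobound_adj; case: ifP => // _.
by apply: eq_bigr => t _; rewrite fg.
Qed.

End CoboundaryLinear.

Section LabelScaling.
Context {R : realFieldType} {N : nat} {o : simplex N -> bool}
  {lab : 'I_N -> R} {F : simplex N -> R} {c : R}.
Let clab v := c * lab v.
Implicit Types (X : {set simplex N}) (f : cochain R N).

Lemma restr_scale_label sigma tau :
  restr clab F sigma tau = c ^+ #|tau :\: sigma| * restr lab F sigma tau.
Proof. by rewrite /restr big_split /= prodr_const !mulrA [_ * c ^+ _]mulrC. Qed.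

Lemma incidence_restr_scale_label sigma tau :
  incidence R o sigma tau * restr clab F sigma tau =
  c * (incidence R o sigma tau * restr lab F sigma tau).
Proof.
rewrite restr_scale_label /incidence.
case: ifP => [/andP[sub /eqP card] | _]; last by rewrite !mul0r mulr0.
have -> : #|tau :\: sigma| = 1%N by rewrite cardsD (setIidPr sub) card subSnn.
by rewrite expr1 mulrCA.
Qed.

Lemma cobound_scale_label X q f :
  cobound o clab F X q f =1 (fun s => c * cobound o lab F X q f s).
Proof.
move=> s; rewrite /cobound; case: ifP => _; last by rewrite mulr0.
rewrite mulr_sumr; apply: eq_bigr => t _.
by rewrite incidence_restr_scale_label -!mulrA.
Qed.

Lemma cobound_adj_scale_label X q f :
  cobound_adj o clab F X q f =1 (fun s => c * cobound_adj o lab F X q f s).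
Proof.
move=> s; rewrite /cobound_adj; case: ifP => _; last by rewrite mulr0.
rewrite mulr_sumr; apply: eq_bigr => t _.
by rewrite incidence_restr_scale_label -!mulrA.
Qed.

End LabelScaling.

Section PersistentCochains.
Context {R : realFieldType} {N : nat} {o : simplex N -> bool}
  {lab : 'I_N -> R} {F : simplex N -> R} {Xt Xtp : {set simplex N}} {q : nat}.
Implicit Types (e f : cochain R N).

Lemma persCZ k e :
  persC o lab F Xt Xtp q e -> persC o lab F Xt Xtp q (fun s => k * e s).
Proof.
case=> he hadj; split; first exact: inCZ.
by apply: (eq_inC _ (inCZ (k := k) hadj)) => s; rewrite cobound_adjZ.
Qed.

Lemma persCB e f : persC o lab F Xt Xtp q e -> persC o lab F Xt Xtp q f ->
  persC o lab F Xt Xtp q (e \- f).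
Proof.
case=> he hadje [hf hadjf]; split; first exact: inCB.
by apply: (eq_inC _ (inCB hadje hadjf)) => s; rewrite cobound_adjB.
Qed.

End PersistentCochains.

Section PersistentLaplacianScaling.
Context {R : realFieldType} {N : nat} {o : simplex N -> bool}
  {lab : 'I_N -> R} {F : simplex N -> R} {c : R}
  {Xt Xtp : {set simplex N}} {q : nat} {eth eth' : cochain R N -> cochain R N}.
Hypothesis c0 : c != 0.
Let clab v := c * lab v.
Hypothesis eth_adj : is_eth o lab F Xt Xtp q eth.
Hypothesis eth'_adj : is_eth o clab F Xt Xtp q eth'.

Lemma persC_scale_label e :
  persC o clab F Xt Xtp q e <-> persC o lab F Xt Xtp q e.
Proof.
split=> -[he hadj]; split=> //.
  apply: (eq_inC _ (inCZ (k := c^-1) hadj)) => s.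
  by rewrite cobound_adj_scale_label mulKf.
by apply: (eq_inC _ (inCZ (k := c) hadj)) => s; rewrite cobound_adj_scale_label.
Qed.

Lemma eth_scale_label x : inC Xt q x -> eth' x =1 (fun s => c * eth x s).
Proof.
move=> hx; have [P adjP] := eth_adj hx; have [P' adjP'] := eth'_adj hx.
set d := eth' x \- (fun s => c * eth x s).
have Pd : persC o lab F Xt Xtp q d.
  by apply: persCB; [apply/persC_scale_label | apply: persCZ].
have : dot d d = 0.
  have Pd' : persC o clab F Xt Xtp q d by apply/persC_scale_label.
  rewrite {1}/d dotBl dotZl adjP' // adjP //.
  by rewrite (eq_dotr _ (cobound_adj_scale_label _ _ _)) dotZr subrr.
by move=> /dot_self_eq0 d0 s; apply/eqP; rewrite -subr_eq0; apply/eqP/d0.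
Qed.

Lemma pers_lap_scale_label x : inC Xt q x ->
  pers_lap o clab F Xt Xtp q eth' x =1
  (fun s => c ^+ 2 * pers_lap o lab F Xt Xtp q eth x s).
Proof.
move=> hx s; rewrite /pers_lap mulrDr expr2 -mulrA; congr (_ + _).
  by rewrite cobound_adj_scale_label (eq_cobound_adj (eth_scale_label hx))
    cobound_adjZ.
case: q => [|q']; first by rewrite mulr0.
rewrite cobound_scale_label (eq_cobound (cobound_adj_scale_label _ _ _)).
by rewrite coboundZ mulrA.
Qed.

Lemma pers_lap_mx_scale_label :
  pers_lap_mx o clab F Xt Xtp q eth' = c ^+ 2 *: pers_lap_mx o lab F Xt Xtp q eth.
Proof.
apply/matrixP => i j; rewrite !mxE pers_lap_scale_label //.
exact/basis_vec_inC/enum_valP.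
Qed.

End PersistentLaplacianScaling.

Theorem mainTheorem5 (R : realFieldType) (N : nat)
  (Xt Xtp : {set simplex N}) (o : simplex N -> bool)
  (lab : 'I_N -> R) (F : simplex N -> R) (c : R) (q : nat)
  (eth eth' : cochain R N -> cochain R N) :
  is_complex Xt -> is_complex Xtp -> Xt \subset Xtp ->
  (forall v : 'I_N, [set v] \in Xtp -> lab v != 0) ->
  (forall s, s \in Xtp -> F s != 0) ->
  c != 0 ->
  is_eth o lab F Xt Xtp q eth ->
  is_eth o (fun v => c * lab v) F Xt Xtp q eth' ->
  forall lambda : R,
    mup (c ^+ 2 * lambda)
        (char_poly (pers_lap_mx o (fun v => c * lab v) F Xt Xtp q eth'))
    = mup lambda (char_poly (pers_lap_mx o lab F Xt Xtp q eth)).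
Proof.
move=> _ _ _ _ _ c0 eth_adj eth'_adj lambda.
rewrite (pers_lap_mx_scale_label c0 eth_adj eth'_adj).
exact: mup_char_polyZ (expf_neq0 2 c0).
Qed.
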